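(* Let $G=(V,E,w)$ be a strongly connected directed weighted graph, let $S_1\subseteq S_2\subseteq V$, and let $0\le\delta_1\le\delta_2$. Then $\operatorname{fp}(G^{S_1},\delta_1)\le\operatorname{fp}(G^{S_2},\delta_2)$.
   Context: Positional Voter model. A graph $G=(V,E,w)$ has node set $V$ with $|V|=n$, edge set $E\subseteq V\times V$ and weights $w\colon E\to\mathbb{R}_{>0}$; $\operatorname{in}(u)=\{v\in V:(v,u)\in E\}$. A configuration is a set $X\subseteq V$ (the nodes carrying the novel trait $A$). Given a biased set $S\subseteq V$ and bias $\delta\ge 0$, define $f^S_X(v\mid u)=1+\delta$ if $v\in X$ and $u\in S$, and $1$ otherwise. The process $(\mathcal{X}_t)_{t\ge0}$: given $\mathcal{X}_t=X$, a node $u$ is chosen uniformly at random from $V$, then $v\in\operatorname{in}(u)$ is chosen with probability $\frac{f^S_X(v\mid u)\,w(v,u)}{\sum_{x\in\operatorname{in}(u)} f^S_X(x\mid u)\,w(x,u)}$, and $\mathcal{X}_{t+1}=X\cup\{u\}$ if $v\in X$, $\mathcal{X}_{t+1}=X\setminus\{u\}$ otherwise. Define $\operatorname{fp}(G^S,\delta,X)=\mathbb{P}[\exists t\ge0:\mathcal{X}_t=V\mid\mathcal{X}_0=X]$ and $\operatorname{fp}(G^S,\delta)=\frac1n\sum_{u\in V}\operatorname{fp}(G^S,\delta,\{u\})$. *)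

From HB Require Import structures.
From mathcomp Require Import all_boot all_order all_algebra.
From mathcomp Require Import all_classical all_reals topology normedtype sequences.
Set Implicit Arguments. Unset Strict Implicit. Unset Printing Implicit Defensive.
Import Order.TTheory GRing.Theory Num.Theory numFieldNormedType.Exports.
Local Open Scope ring_scope.

(* Graph G = (V, E, w): V is a finType, w : V -> V -> R with w v u >= 0 the
   weight of the edge (v,u); (v,u) \in E iff 0 < w v u. *)
Definition edge (R : realType) (V : finType) (w : V -> V -> R) : rel V :=
  fun v u => 0 < w v u.

Definition strongly_connected (R : realType) (V : finType) (w : V -> V -> R) :=
  forall x y : V, connect (edge w) x y.

Definition fitness (R : realType) (V : finType) (S : {set V}) (delta : R)
  (X : {set V}) (v u : V) : R :=
  if (v \in X) && (u \in S) then 1 + delta else 1.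

(* probability that u copies v, given configuration X (sums over in(u);
   non-edges have weight 0) *)
Definition copy_prob (R : realType) (V : finType) (w : V -> V -> R)
  (S : {set V}) (delta : R) (X : {set V}) (u v : V) : R :=
  fitness S delta X v u * w v u /
  (\sum_(x : V | 0 < w x u) fitness S delta X x u * w x u).

Definition update (V : finType) (X : {set V}) (u v : V) : {set V} :=
  if v \in X then u |: X else X :\ u.

(* hit w S delta t X = P[ exists s <= t, X_s = V | X_0 = X ] *)
Fixpoint hit (R : realType) (V : finType) (w : V -> V -> R)
  (S : {set V}) (delta : R) (t : nat) (X : {set V}) : R :=
  if X == [set: V] then 1 else
  match t with
  | 0 => 0
  | t'.+1 =>
      (#|V|%:R)^-1 *
      \sum_(u : V) \sum_(v : V | 0 < w v u)
          copy_prob w S delta X u v * hit w S delta t' (update X u v)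
  end.

(* fp(G^S, delta, X) = P[ exists t >= 0, X_t = V | X_0 = X ]
   = lim_t P[ exists s <= t, X_s = V ] (continuity from below). *)
Definition fp_from (R : realType) (V : finType) (w : V -> V -> R)
  (S : {set V}) (delta : R) (X : {set V}) : R :=
  limn (fun t => hit w S delta t X).

Definition fp (R : realType) (V : finType) (w : V -> V -> R)
  (S : {set V}) (delta : R) : R :=
  (#|V|%:R)^-1 * \sum_(u : V) fp_from w S delta [set u].

From HB Require Import structures.
From mathcomp Require Import all_boot all_order all_algebra.
From mathcomp Require Import all_classical all_reals topology normedtype sequences.
From mathcomp Require Import ring lra.
Set Implicit Arguments. Unset Strict Implicit. Unset Printing Implicit Defensive.
Import Order.TTheory GRing.Theory Num.Theory numFieldNormedType.Exports.
Local Open Scope ring_scope.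

(* A step of the process only changes the state of the chosen node u, and it
   becomes A with probability k a / (k a + (T - a)), where a and T are the
   in-weights of u from A-nodes and from all nodes and k >= 1 is the bias of u.
   This probability grows with k, with the bias set and with the configuration,
   so the process can be coupled monotonically: hit probabilities within t steps
   are monotone in (S, delta, X) by induction on t, and fp is their limit. *)

Section BiasedMean.
Variable R : realFieldType.

Definition biased_mean (k a T A B : R) :=
  (k * a * A + (T - a) * B) / (k * a + (T - a)).

Lemma biased_meanE (k a T A B : R) : 0 < k * a + (T - a) ->
  biased_mean k a T A B = k * a / (k * a + (T - a)) * A
                          + (1 - k * a / (k * a + (T - a))) * B.
Proof. by move=> s_gt0; rewrite /biased_mean; field; rewrite gt_eqF. Qed.

Lemma biased_weight_le (k1 k2 a e T : R) :
  1 <= k1 -> k1 <= k2 -> 0 <= a -> a <= e -> e <= T -> 0 < T ->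
  k1 * a / (k1 * a + (T - a)) <= k2 * e / (k2 * e + (T - e)).
Proof.
move=> k1_ge1 k12 a_ge0 ae eT T_gt0.
have s1_gt0 : 0 < k1 * a + (T - a) by nra.
have s2_gt0 : 0 < k2 * e + (T - e) by nra.
rewrite ler_pdivrMr // mulrAC ler_pdivlMr //.
have ka_le : k1 * a <= k2 * e by nra.
have cross : k1 * a * (T - e) <= k2 * e * (T - a) by apply: ler_pM; nra.
nra.
Qed.

Lemma biased_mean_le (k1 k2 a e T A B C D : R) :
  1 <= k1 -> k1 <= k2 -> 0 <= a -> a <= e -> e <= T ->
  A <= C -> B <= C -> B <= D ->
  biased_mean k1 a T A B <= biased_mean k2 e T C D.
Proof.
move=> k1_ge1 k12 a_ge0 ae eT AC BC BD.
have [T0|T_neq0] := eqVneq T 0.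
  have [-> ->] : a = 0 /\ e = 0 by split; lra.
  by rewrite T0 /biased_mean !(mulr0, subrr, addr0, invr0).
have T_gt0 : 0 < T by lra.
rewrite !biased_meanE; [|nra|nra].
set p1 := k1 * a / _; set p2 := k2 * e / _.
have p1_ge0 : 0 <= p1 by rewrite divr_ge0 //; nra.
have p2_le1 : p2 <= 1 by rewrite ler_pdivrMr ?mul1r; nra.
have p12 : p1 <= p2 by apply: biased_weight_le.
have : 0 <= p1 * (C - A) by apply: mulr_ge0; lra.
have : 0 <= (p2 - p1) * (C - B) by apply: mulr_ge0; lra.
have : 0 <= (1 - p2) * (D - B) by apply: mulr_ge0; lra.
nra.
Qed.

End BiasedMean.

Section PositionalVoter.
Variables (R : realType) (V : finType) (w : V -> V -> R).

Definition bias (S : {set V}) (delta : R) (u : V) : R :=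
  if u \in S then 1 + delta else 1.

Definition in_weight (u : V) : R := \sum_(v | 0 < w v u) w v u.

Definition in_weight_from (X : {set V}) (u : V) : R :=
  \sum_(v | (0 < w v u) && (v \in X)) w v u.

Lemma bias_ge1 (S : {set V}) (delta : R) (u : V) :
  0 <= delta -> 1 <= bias S delta u.
Proof. by rewrite /bias; case: ifP => _; lra. Qed.

Lemma bias_le (S1 S2 : {set V}) (d1 d2 : R) (u : V) :
  S1 \subset S2 -> 0 <= d1 -> d1 <= d2 -> bias S1 d1 u <= bias S2 d2 u.
Proof.
move=> /fintype.subsetP S12 d1_ge0 d12; rewrite /bias.
have [/S12 -> | _] := boolP (u \in S1); first lra.
by case: ifP => _; lra.
Qed.

Lemma in_weight_from_ge0 (X : {set V}) (u : V) : 0 <= in_weight_from X u.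
Proof. by apply: sumr_ge0 => v /andP[/ltW]. Qed.

Lemma in_weight_from_subset (X Y : {set V}) (u : V) : X \subset Y ->
  in_weight_from X u <= in_weight_from Y u.
Proof.
move=> /fintype.subsetP XY; rewrite [leRHS](bigID (mem X)) /=.
rewrite [leLHS](eq_bigl (fun v => (0 < w v u) && (v \in Y) && (v \in X))).
  by rewrite lerDl sumr_ge0 // => v /andP[/andP[/ltW]].
by move=> v; have [/XY ->|_] := boolP (v \in X); rewrite ?andbT ?andbF.
Qed.

Lemma in_weightD (X : {set V}) (u : V) :
  in_weight u =
  in_weight_from X u + \sum_(v | (0 < w v u) && (v \notin X)) w v u.
Proof. by rewrite /in_weight (bigID (mem X)). Qed.

Lemma in_weight_from_le (X : {set V}) (u : V) :
  in_weight_from X u <= in_weight u.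
Proof. by rewrite (in_weightD X) lerDl sumr_ge0 // => v /andP[/ltW]. Qed.

Lemma copy_sum_biased_mean (S : {set V}) (delta : R) (X : {set V}) (u : V)
    (h : {set V} -> R) :
  \sum_(v | 0 < w v u) copy_prob w S delta X u v * h (update X u v) =
  biased_mean (bias S delta u) (in_weight_from X u) (in_weight u)
    (h (u |: X)) (h (X :\ u)).
Proof.
rewrite /biased_mean.
have -> : in_weight u - in_weight_from X u =
          \sum_(v | (0 < w v u) && (v \notin X)) w v u.
  by rewrite (in_weightD X) addrAC subrr add0r.
have den : \sum_(x | 0 < w x u) fitness S delta X x u * w x u =
    bias S delta u * in_weight_from X u
    + \sum_(v | (0 < w v u) && (v \notin X)) w v u.
  rewrite (bigID (mem X)) /= mulr_sumr; congr (_ + _); apply: eq_bigr.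
    by move=> v /andP[_ vX]; rewrite /fitness vX.
  by move=> v /andP[_ /negbTE vX]; rewrite /fitness vX mul1r.
rewrite /copy_prob den.
under eq_bigr do rewrite mulrAC.
rewrite -mulr_suml (bigID (mem X)) /= mulr_sumr !mulr_suml.
congr ((_ + _) / _); apply: eq_bigr.
  by move=> v /andP[_ vX]; rewrite /fitness /update vX.
by move=> v /andP[_ /negbTE vX]; rewrite /fitness /update vX mul1r.
Qed.

Lemma hitS (S : {set V}) (delta : R) (t : nat) (X : {set V}) :
  hit w S delta t.+1 X =
  if X == [set: V] then 1 else
    #|V|%:R^-1 * \sum_u \sum_(v | 0 < w v u)
      copy_prob w S delta X u v * hit w S delta t (update X u v).
Proof. by []. Qed.

Lemma copy_prob_ge0 (S : {set V}) (delta : R) (X : {set V}) (u v : V) :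
  0 <= delta -> 0 < w v u -> 0 <= copy_prob w S delta X u v.
Proof.
move=> delta_ge0 vu.
have term_ge0 x : 0 < w x u -> 0 <= fitness S delta X x u * w x u.
  by move=> /ltW xu; rewrite mulr_ge0 // /fitness; case: ifP => _; lra.
by rewrite /copy_prob divr_ge0 ?term_ge0 // sumr_ge0.
Qed.

Lemma copy_prob_sum_le1 (S : {set V}) (delta : R) (X : {set V}) (u : V) :
  \sum_(v | 0 < w v u) copy_prob w S delta X u v <= 1.
Proof.
rewrite /copy_prob -mulr_suml.
set den := \sum_(x | _) _.
by have [->|den_neq0] := eqVneq den 0; rewrite ?invr0 ?mulr0 ?mulfV.
Qed.

Variables (S : {set V}) (delta : R).
Hypothesis delta_ge0 : 0 <= delta.

Lemma hit_ge0 (t : nat) (X : {set V}) : 0 <= hit w S delta t X.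
Proof.
elim: t X => [|t IH] X /=; case: ifP => // _.
rewrite mulr_ge0 ?invr_ge0 ?ler0n // !sumr_ge0 // => u _; rewrite sumr_ge0 //.
by move=> v vu; rewrite mulr_ge0 ?copy_prob_ge0.
Qed.

Lemma hit_le1 (t : nat) (X : {set V}) : hit w S delta t X <= 1.
Proof.
elim: t X => [|t IH] X /=; case: ifP => // _.
have [->|V_neq0] := eqVneq (#|V|%:R : R) 0; first by rewrite invr0 mul0r.
rewrite ler_pdivrMl ?lt0r ?V_neq0 ?ler0n // mulr1.
apply: le_trans (_ : \sum_(u : V) 1 <= _); last by rewrite sumr_const.
apply: ler_sum => u _; apply: le_trans (copy_prob_sum_le1 S delta X u).
by apply: ler_sum => v vu; rewrite ler_piMr ?copy_prob_ge0.
Qed.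

Lemma hit_leS (t : nat) (X : {set V}) :
  hit w S delta t X <= hit w S delta t.+1 X.
Proof.
elim: t X => [|t IH] X.
  rewrite [leLHS]/=; case: ifP => [/eqP -> | _]; first by rewrite hitS eqxx.
  exact: hit_ge0.
rewrite hitS [leRHS]hitS; case: ifP => // _.
rewrite ler_wpM2l ?invr_ge0 ?ler0n // ler_sum // => u _.
by rewrite ler_sum // => v vu; rewrite ler_wpM2l ?copy_prob_ge0.
Qed.

Lemma hit_cvgn (X : {set V}) : cvgn (hit w S delta ^~ X).
Proof.
apply: nondecreasing_is_cvgn.
  by apply/nondecreasing_seqP => t; exact: hit_leS.
by exists 1 => _ [t _ <-]; exact: hit_le1.
Qed.

End PositionalVoter.

Lemma hit_le (R : realType) (V : finType) (w : V -> V -> R)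
  (S1 S2 : {set V}) (d1 d2 : R) (t : nat) (X Y : {set V}) :
  S1 \subset S2 -> 0 <= d1 -> d1 <= d2 -> X \subset Y ->
  hit w S1 d1 t X <= hit w S2 d2 t Y.
Proof.
move=> S12 d1_ge0 d12; have d2_ge0 : 0 <= d2 by lra.
have full (X' Y' : {set V}) : X' \subset Y' -> X' = [set: V] -> Y' = [set: V].
  by move=> XY' XV; apply/eqP; rewrite finset.eqEsubset finset.subsetT -XV.
elim: t X Y => [|t IH] X Y XY.
  rewrite /=; have [/(full _ _ XY) -> | _] := eqVneq X [set: V].
    by rewrite eqxx.
  by case: ifP => _; rewrite ?ler01.
have [YV | YnV] := eqVneq Y [set: V].
  by rewrite [leRHS]hitS YV eqxx hit_le1.
have XnV : X != [set: V] := contra_neq (full X Y XY) YnV.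
rewrite !hitS (negbTE XnV) (negbTE YnV) ler_wpM2l ?invr_ge0 ?ler0n //.
apply: ler_sum => u _.
rewrite !copy_sum_biased_mean biased_mean_le ?bias_ge1 ?bias_le
  ?in_weight_from_ge0 ?in_weight_from_subset ?in_weight_from_le //.
- by apply: IH; rewrite finset.setUS.
- apply: IH; apply: fintype.subset_trans (finset.subsetDl X [set u]) _.
  exact: fintype.subset_trans XY (finset.subsetUr _ _).
- by apply: IH; rewrite finset.setSD.
Qed.

Theorem mainTheorem6 (R : realType) (V : finType) (w : V -> V -> R)
  (w_ge0 : forall v u : V, 0 <= w v u)
  (hconn : strongly_connected w)
  (S1 S2 : {set V}) (hS : S1 \subset S2)
  (delta1 delta2 : R) (hd1 : 0 <= delta1) (hd12 : delta1 <= delta2) :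
  fp w S1 delta1 <= fp w S2 delta2.
Proof.
have hd2 : 0 <= delta2 by lra.
rewrite /fp ler_wpM2l ?invr_ge0 ?ler0n // ler_sum // => u _.
apply: ler_lim; [exact: hit_cvgn | exact: hit_cvgn |].
by apply: nearW => t; apply: hit_le.
Qed.
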